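(* Let $k$ be an étale cubic algebra over $\mathbb{Q}$ and $f$ a square free positive integer such that no prime number dividing $f$ is of type $3$ in $k$. Then for each ideal $\mathfrak{f}$ of $\mathcal{O}_k$ with $f\mathcal{O}_k\subset\mathfrak{f}$ and $N(\mathfrak{f})=f^2$, there exists exactly one order $R$ of index $f$ in $\mathcal{O}_k$ whose conductor is $\mathfrak{f}$, namely $R=\mathbb{Z}+\mathfrak{f}$.
   Context: An étale cubic algebra is a direct sum of number fields with total degree $3$; $\mathcal{O}_k$ is its maximal order; an order is a finite-index subring with unit of $\mathcal{O}_k$, and its conductor is the largest $\mathcal{O}_k$-ideal contained in it. $N(\mathfrak{f})=(\mathcal{O}_k:\mathfrak{f})$. A prime $p$ is of type $3$ in $k$ if $k$ is a cubic field in which $p$ is inert (i.e. $p\mathcal{O}_k$ is prime of norm $p^3$). *)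

From HB Require Import structures.
From mathcomp Require Import all_boot all_order all_algebra all_field.
Set Implicit Arguments. Unset Strict Implicit. Unset Printing Implicit Defensive.
Import Order.TTheory GRing.Theory Num.Theory.
Local Open Scope ring_scope.

(* An etale cubic Q-algebra: a finite-dimensional Q-algebra L, commutative,
   of dimension 3, and reduced (no nonzero nilpotents); over Q (perfect) this
   is exactly a finite product of number fields of total degree 3. *)
Definition etale_cubic (L : falgType rat) : Prop :=
  [/\ (forall x y : L, x * y = y * x),
      \dim (fullv : {vspace L}) = 3%N &
      (forall x : L, x ^+ 2 = 0 -> x = 0)].

Definition Ok (L : falgType rat) (x : L) : Prop :=
  exists p : {poly int}, p \is monic /\
    (map_poly (fun z : int => z%:~R : L) p).[x] = 0.

Definition has_index (L : falgType rat) (B A : L -> Prop) (n : nat) : Prop :=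
  exists s : seq L, size s = n /\
    (forall i, (i < n)%N -> B (nth 0 s i)) /\
    (forall x, B x -> exists! i : nat, (i < n)%N /\ A (x - nth 0 s i)).

Definition is_Ok_ideal (L : falgType rat) (I : L -> Prop) : Prop :=
  [/\ (forall x, I x -> Ok x), I 0,
      (forall x y, I x -> I y -> I (x - y)) &
      (forall a x, Ok a -> I x -> I (a * x))].

Definition ideal_norm_is (L : falgType rat) (I : L -> Prop) (n : nat) : Prop :=
  has_index (@Ok L) I n.

Definition is_prime_Ok_ideal (L : falgType rat) (I : L -> Prop) : Prop :=
  [/\ is_Ok_ideal I, (exists x, Ok x /\ ~ I x) &
      (forall a b, Ok a -> Ok b -> I (a * b) -> I a \/ I b)].

Definition is_order (L : falgType rat) (R : L -> Prop) : Prop :=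
  [/\ (forall x, R x -> Ok x), R 1,
      (forall x y, R x -> R y -> R (x - y)),
      (forall x y, R x -> R y -> R (x * y)) &
      exists n, has_index (@Ok L) R n].

Definition is_conductor (L : falgType rat) (R F : L -> Prop) : Prop :=
  [/\ is_Ok_ideal F, (forall x, F x -> R x) &
      (forall I, is_Ok_ideal I -> (forall x, I x -> R x) -> forall x, I x -> F x)].

Definition pOk (L : falgType rat) (p : nat) (x : L) : Prop :=
  exists y, Ok y /\ x = p%:R * y.

Definition type3 (L : falgType rat) (p : nat) : Prop :=
  [/\ (forall x : L, x != 0 -> x \is a GRing.unit),
      is_prime_Ok_ideal (@pOk L p) &
      ideal_norm_is (@pOk L p) (p ^ 3)%N].

Definition squarefree (n : nat) : Prop :=
  forall p, prime p -> ~~ (p ^ 2 %| n)%N.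

Definition Zplus (L : falgType rat) (F : L -> Prop) (x : L) : Prop :=
  exists z : int, F (x - z%:~R).

From HB Require Import structures.
From mathcomp Require Import all_boot all_order all_algebra all_field all_fingroup all_solvable.
From Stdlib Require Import ClassicalEpsilon.
Set Implicit Arguments. Unset Strict Implicit. Unset Printing Implicit Defensive.
Import Order.TTheory GRing.Theory Num.Theory FinRing.Theory.

(* Let M be a subgroup of index n of O_k with d O_k contained in M. For a prime
   p not dividing d, Bezout gives x = u (d x) + p (v x), so multiplication by p
   is onto O_k/M and, by Cauchy, p does not divide n; as f is squarefree, f | d
   as soon as n is f or f^2. For M = F and d the order of 1 in O_k/F this shows
   that Z meets F in fZ, hence (O_k : Z + F) = f^2/f = f. For M = Z + F and
   x = z + y (y in F) in an ideal contained in Z + F, z O_k lies in Z + F, so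
   f | z and x lies in F: F is the conductor of Z + F. Finally an order R with
   conductor F contains Z + F, and nested subgroups of O_k of equal finite index
   coincide. *)

Lemma squarefree_dvdn f m : (0 < f)%N -> squarefree f ->
  (forall p, prime p -> (p %| f)%N -> (p %| m)%N) -> (f %| m)%N.
Proof.
move=> f_gt0 sqf_f dvd_m; apply/dvdn_partP => // p.
rewrite mem_primes => /and3P[p_pr _ p_f].
suff -> : f`_p = p by apply: dvd_m.
have := sqf_f p p_pr; rewrite p_part pfactor_dvdn // -ltnNge ltnS => log_le1.
have : (0 < logn p f)%N by rewrite logn_gt0 mem_primes p_pr f_gt0.
by case: (logn p f) log_le1 => [|[|]].
Qed.

Lemma onto_injF (T : finType) (h : T -> T) : (forall y, exists x, y = h x) -> injective h.
Proof.
move=> h_onto x y; apply: (@imset_injP _ _ h setT); rewrite ?inE //.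
apply/eqP/eq_card => z; rewrite inE; have [w ->] := h_onto z; exact: imset_f.
Qed.

Lemma expgn_not_onto (gT : finGroupType) p : prime p -> (p %| #|gT|)%N ->
  ~ (forall x : gT, exists y, x = y ^+ p)%g.
Proof.
move=> p_pr p_dvd pth_root.
have [x _ ox] : {x | x \in [set: gT] & #[x]%g = p} by apply: Cauchy; rewrite ?cardsT.
have x1 : x = 1%g by apply: onto_injF pth_root _ _ _; rewrite /= expg1n -ox expg_order.
by move: p_pr; rewrite -ox x1 order1.
Qed.

Local Open Scope ring_scope.

Lemma mulrz_mem_cycle (U : finZmodType) (x : U) z : x *~ z \in <[x]>%g.
Proof.
case: z => k; rewrite ?NegzE ?mulrNz -pmulrn -zmodXgE ?mem_cycle //.
by rewrite -zmodVgE groupV mem_cycle.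
Qed.

Definition additive_subgroup (V : zmodType) (S : V -> Prop) : Prop :=
  S 0 /\ (forall x y, S x -> S y -> S (x - y)).

Section AdditiveSubgroup.
Variables (V : zmodType) (S : V -> Prop).
Hypothesis S_subgroup : additive_subgroup S.

Lemma subgroup0 : S 0. Proof. by case: S_subgroup. Qed.

Lemma subgroupB x y : S x -> S y -> S (x - y). Proof. by case: S_subgroup => _; apply. Qed.

Lemma subgroupN x : S x -> S (- x).
Proof. by move=> Sx; rewrite -sub0r; apply: subgroupB Sx; apply: subgroup0. Qed.

Lemma subgroupD x y : S x -> S y -> S (x + y).
Proof. by move=> Sx Sy; rewrite -[y]opprK; apply: subgroupB Sx (subgroupN Sy). Qed.

Lemma subgroupMn x k : S x -> S (x *+ k).
Proof.
move=> Sx; elim: k => [|k IHk]; first by rewrite mulr0n; apply: subgroup0.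
by rewrite mulrS; apply: subgroupD.
Qed.

Lemma subgroupMz x z : S x -> S (x *~ z).
Proof.
by case: z => k Sx; rewrite ?NegzE ?mulrNz; [|apply: subgroupN]; apply: subgroupMn.
Qed.

Lemma subgroupMz_abs x z : S (x *~ z) <-> S (x *+ `|z|%N).
Proof.
case: z => k //=; rewrite NegzE mulrNz.
by split=> [/subgroupN | /subgroupN]; rewrite ?opprK.
Qed.

End AdditiveSubgroup.

(* [R] with its commutativity made canonical, so that the integrality lemmas of
   mxpoly apply. *)
Definition com_of (R : nzRingType) of commutative (@GRing.mul R) : Type := R.
HB.instance Definition _ R mulC := GRing.NzRing.on (@com_of R mulC).
HB.instance Definition _ R mulC :=
  GRing.Ring_hasCommutativeMul.Build (@com_of R mulC) mulC.

Section IntegralElements.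
Variables (L : falgType rat) (mulC : commutative (@GRing.mul L)).

Lemma OkP (x : L) : Ok x <-> integralOver (intr : int -> com_of mulC) x.
Proof. by split=> [[p [? /rootP]]|[p ? /rootP]]; exists p. Qed.

Lemma Ok_int z : Ok (z%:~R : L).
Proof. by apply/OkP; apply: (integral_id (intr : {rmorphism int -> com_of mulC})). Qed.

Lemma Ok_subgroup : additive_subgroup (@Ok L).
Proof.
split; first by have := Ok_int 0; rewrite mulr0z.
by move=> x y /OkP Ox /OkP Oy; apply/OkP; apply: integral_sub.
Qed.

Lemma Ok_mul (x y : L) : Ok x -> Ok y -> Ok (x * y).
Proof. by move=> /OkP Ox /OkP Oy; apply/OkP; apply: integral_mul. Qed.

End IntegralElements.

Section QuotientByTransversal.
Variables (L : falgType rat) (B A : L -> Prop) (n : nat).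
Hypotheses (B_subgroup : additive_subgroup B) (A_subgroup : additive_subgroup A).
Hypothesis index_BA : has_index B A n.

Let t := proj1_sig (constructive_indefinite_description _ index_BA).
Let t_spec := proj2_sig (constructive_indefinite_description _ index_BA).

Let t_in i : (i < n)%N -> B (nth 0 t i).
Proof. by case: t_spec => _ [t_in _]; apply: t_in. Qed.

Let t_transversal x : B x -> exists! i, (i < n)%N /\ A (x - nth 0 t i).
Proof. by case: t_spec => _ [_ t_tr]; apply: t_tr. Qed.

Lemma index_gt0 : (0 < n)%N.
Proof.
by have [i [[lt_in _] _]] := t_transversal (subgroup0 B_subgroup); apply: leq_ltn_trans lt_in.
Qed.

(* B/A, realized on the indices of the transversal [t]. *)
Definition quot : predArgType := 'I_n.
HB.instance Definition _ := Finite.on quot.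

Definition rep (q : quot) : L := nth 0 t q.
Definition cls (x : L) : quot :=
  epsilon (inhabits (Ordinal index_gt0)) (fun q : quot => A (x - rep q)).

Lemma rep_in q : B (rep q). Proof. exact: t_in. Qed.

Lemma cls_spec x : B x -> A (x - rep (cls x)).
Proof.
move=> Bx; apply: (epsilon_spec _ (fun q : quot => A (x - rep q))).
by have [i [[lt_in Ai] _]] := t_transversal Bx; exists (Ordinal lt_in).
Qed.

Lemma cls_eqP x y : B x -> B y -> cls x = cls y <-> A (x - y).
Proof.
move=> Bx By; have Ax := cls_spec Bx; have Ay := cls_spec By.
split=> [eq_xy | Axy].
  have := subgroupB A_subgroup Ax Ay.
  by rewrite eq_xy opprB addrA subrK.
have [i [_ uniq_i]] := t_transversal Bx; apply: ord_inj.
rewrite -(uniq_i (cls x)) ?(uniq_i (cls y)) //; split=> //.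
by have := subgroupD A_subgroup Axy Ay; rewrite addrA subrK.
Qed.

Lemma cls_rep q : cls (rep q) = q.
Proof.
have [i [_ uniq_i]] := t_transversal (rep_in q); apply: ord_inj.
rewrite -(uniq_i q) ?(uniq_i (cls (rep q))) //; split=> //; first exact: cls_spec (rep_in q).
by rewrite subrr; apply: subgroup0.
Qed.

Lemma cls_addl x y : B x -> B y -> cls (rep (cls x) + y) = cls (x + y).
Proof.
move=> Bx By; have Bcx := rep_in (cls x).
apply/cls_eqP; try by apply: subgroupD.
rewrite opprD addrACA subrr addr0 -opprB; exact: subgroupN (cls_spec Bx).
Qed.

Lemma cls_addr x y : B x -> B y -> cls (x + rep (cls y)) = cls (x + y).
Proof. by move=> Bx By; rewrite addrC cls_addl // addrC. Qed.

Definition quot_add (q r : quot) : quot := cls (rep q + rep r).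
Definition quot_opp (q : quot) : quot := cls (- rep q).
Definition quot_zero : quot := cls 0.

Lemma quot_addA : associative quot_add.
Proof.
move=> q r s; have Bq := rep_in q; have Br := rep_in r; have Bs := rep_in s.
by rewrite /quot_add cls_addr ?cls_addl ?addrA //; apply: subgroupD.
Qed.

Lemma quot_addC : commutative quot_add.
Proof. by move=> q r; rewrite /quot_add addrC. Qed.

Lemma quot_add0 : left_id quot_zero quot_add.
Proof.
move=> q; have Bq := rep_in q.
by rewrite /quot_add cls_addl ?add0r ?cls_rep //; apply: subgroup0.
Qed.

Lemma quot_addN : left_inverse quot_zero quot_opp quot_add.
Proof.
move=> q; have Bq := rep_in q.
by rewrite /quot_add cls_addl ?addNr //; apply: subgroupN.
Qed.

HB.instance Definition _ :=
  GRing.isZmodule.Build quot quot_addA quot_addC quot_add0 quot_addN.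
HB.instance Definition _ := [finGroupMixin of quot for +%R].

Lemma cls0 : cls 0 = 0. Proof. by []. Qed.

Lemma cls_add x y : B x -> B y -> cls (x + y) = cls x + cls y.
Proof.
by move=> Bx By; rewrite -cls_addr // -cls_addl //; apply: rep_in.
Qed.

Lemma cls_sub x y : B x -> B y -> cls (x - y) = cls x - cls y.
Proof.
move=> Bx By; apply: (addIr (cls y)).
by rewrite -cls_add ?subrK ?addNr //; apply: subgroupB.
Qed.

Lemma cls_mulrn x k : B x -> cls (x *+ k) = cls x *+ k.
Proof.
move=> Bx; elim: k => [|k IHk]; first by rewrite !mulr0n.
by rewrite !mulrS cls_add ?IHk //; apply: subgroupMn.
Qed.

Lemma cls_eq0 x : B x -> cls x = 0 <-> A x.
Proof. by move=> Bx; rewrite -cls0 cls_eqP ?subr0 //; apply: subgroup0. Qed.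

Lemma index_prime_dvd d p : (forall x, B x -> A (x *+ d)) ->
  prime p -> (p %| n)%N -> (p %| d)%N.
Proof.
move=> dB_A p_pr p_n; apply: contraT => p_nd.
have [u [v]] := Bezoutz d p.
rewrite /gcdz /= (eqP (_ : coprime d p)) => [Bezout_dp|]; last first.
  by rewrite coprime_sym prime_coprime.
have p_card : (p %| #|quot|)%N by rewrite card_ord.
exfalso; apply: (expgn_not_onto p_pr p_card) => q.
have Bq := rep_in q; have Bv : B (rep q *~ v) by apply: subgroupMz.
have Bvp : B (rep q *~ v *+ p) by apply: subgroupMn.
exists (cls (rep q *~ v)); rewrite zmodXgE -cls_mulrn // -{1}(cls_rep q).
apply/(cls_eqP Bq Bvp).
have -> : rep q - rep q *~ v *+ p = rep q *+ d *~ u.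
  apply/eqP; rewrite subr_eq !pmulrn -!mulrzA -mulrzDr [(d%:Z * u)%R]mulrC Bezout_dp.
  by rewrite mulr1z.
exact (subgroupMz A_subgroup u (dB_A _ Bq)).
Qed.

Lemma cls_mulrz x z : B x -> cls (x *~ z) = cls x *~ z.
Proof.
move=> Bx; case: z => k; first by rewrite -!pmulrn cls_mulrn.
have Bxk := subgroupMn B_subgroup k.+1 Bx.
rewrite NegzE !mulrNz -!pmulrn -[- (x *+ _)]sub0r cls_sub ?sub0r ?cls_mulrn //.
exact: subgroup0.
Qed.

Lemma coset_quot_eqP (H : {group quot}) q r : coset H q = coset H r <-> q - r \in H.
Proof.
have nH : [set: quot] \subset 'N(H)%g := sub_abelian_norm (zmod_abelian _) (subsetT H).
rewrite (_ : q - r = (q * r^-1)%g) // -mem_rcoset.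
by split=> /rcoset_kercosetP; apply; rewrite ?(subsetP nH) ?inE.
Qed.

Lemma card_coset_quot (H : {group quot}) : (#|{: coset_of H}| * #|H|)%N = n.
Proof.
have nH : [set: quot] \subset 'N(H)%g := sub_abelian_norm (zmod_abelian _) (subsetT H).
by rewrite -cardsT -quotientT card_quotient // mulnC Lagrange ?subsetT // cardsT card_ord.
Qed.

Lemma index_quot_group (C : L -> Prop) (H : {group quot}) :
  (forall x, B x -> C x <-> cls x \in H) -> has_index B C #|{: coset_of H}|.
Proof.
move=> CH; set W := enum {: coset_of H}; rewrite cardT -/W.
set s := [seq rep (repr w) | w : coset_of H <- W].
have nthE j : (j < size W)%N -> nth 0 s j = rep (repr (nth 1%g W j)).
  by move=> lt_j; rewrite (nth_map 1%g).
exists s; rewrite size_map; split=> //; split=> [j lt_j | x Bx].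
  by rewrite nthE //; apply: rep_in.
have key j : (j < size W)%N -> C (x - nth 0 s j) <-> coset H (cls x) = nth 1%g W j.
  move=> lt_j; have Bj := rep_in (repr (nth 1%g W j)).
  rewrite nthE // CH; last exact (subgroupB B_subgroup Bx Bj).
  by rewrite cls_sub // cls_rep -coset_quot_eqP coset_reprK.
have x_in_W : coset H (cls x) \in W by rewrite mem_enum.
exists (index (coset H (cls x)) W); split.
  by split; [rewrite index_mem | apply/key; rewrite ?nth_index ?index_mem].
by move=> j [lt_j /(key j lt_j) ->]; rewrite index_uniq ?enum_uniq.
Qed.

Lemma index_cyclic_extension (C : L -> Prop) g m : B g ->
  (forall x, B x -> C x <-> exists z : int, A (x - g *~ z)) ->
  (forall k, A (g *+ k) <-> (m %| k)%N) ->
  has_index B C (n %/ m).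
Proof.
move=> Bg C_cyclic order_g.
have cls_gX k : (cls g ^+ k)%g = cls (g *+ k) by rewrite zmodXgE cls_mulrn.
have ord_g : #[cls g]%g = m.
  have dvd_ord k : (#[cls g]%g %| k)%N = (m %| k)%N.
    have Bgk := subgroupMn B_subgroup k Bg.
    rewrite order_dvdn cls_gX.
    by apply/eqP/idP => [/(cls_eq0 Bgk)/order_g | /order_g/(cls_eq0 Bgk)].
  by apply/eqP; rewrite eqn_dvd -dvd_ord dvdnn dvd_ord dvdnn.
rewrite -(card_coset_quot <[cls g]>%G) /= -/#[cls g]%g ord_g mulnK; last first.
  by rewrite -ord_g order_gt0.
apply: index_quot_group => x Bx; rewrite C_cyclic //; split=> [[z Az] | /cycleP[k]].
  rewrite (_ : cls x = cls (g *~ z)); last by apply/cls_eqP => //; apply: subgroupMz.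
  by rewrite cls_mulrz //; apply: mulrz_mem_cycle.
move=> eq_x; exists k; apply/(cls_eqP Bx (subgroupMn B_subgroup k Bg)).
by rewrite eq_x cls_gX.
Qed.

End QuotientByTransversal.

Lemma index_eq_sub (L : falgType rat) (B A C : L -> Prop) n :
  additive_subgroup B -> additive_subgroup A -> additive_subgroup C ->
  (forall x, A x -> C x) -> has_index B A n -> has_index B C n ->
  forall x, B x -> C x -> A x.
Proof.
move=> hB hA hC AC idxA idxC.
pose clsA := cls hB idxA; pose clsC := cls hB idxC.
pose phi (q : quot n) : quot n := clsC (rep idxA q).
have phi_cls x : B x -> phi (clsA x) = clsC x.
  move=> Bx; apply/(cls_eqP hB hC idxC (rep_in idxA _) Bx).
  by rewrite -opprB; apply: (subgroupN hC); apply: AC; apply: cls_spec.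
have phi_inj : injective phi.
  apply: onto_injF => j; have Bj := rep_in idxC j.
  by exists (clsA (rep idxC j)); rewrite phi_cls // /clsC cls_rep.
move=> x Bx Cx; have B0 := subgroup0 hB.
have /phi_inj : phi (clsA x) = phi (clsA 0).
  by rewrite !phi_cls //; apply/(cls_eqP hB hC idxC Bx B0); rewrite subr0.
by move/(cls_eqP hB hA idxA Bx B0); rewrite subr0.
Qed.

Lemma order_subgroup (L : falgType rat) (R : L -> Prop) :
  is_order R -> additive_subgroup R.
Proof. by case=> _ R1 RB _ _; split=> //; rewrite -(subrr 1); apply: RB. Qed.

Lemma order_int (L : falgType rat) (R : L -> Prop) z : is_order R -> R z%:~R.
Proof.
move=> R_order; have [_ R1 _ _ _] := R_order.
exact (subgroupMz (order_subgroup R_order) z R1).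
Qed.

Section IntegersPlusIdeal.
Variables (L : falgType rat) (F : L -> Prop).
Hypothesis F_ideal : is_Ok_ideal F.

Lemma ideal_subgroup : additive_subgroup F.
Proof. by case: F_ideal. Qed.

Lemma idealM a x : Ok a -> F x -> F (a * x).
Proof. by case: F_ideal => _ _ _; apply. Qed.

Lemma Zplus_subgroup : additive_subgroup (Zplus F).
Proof.
split; first by exists 0; rewrite subr0; apply: subgroup0 ideal_subgroup.
move=> x y [a Fa] [b Fb]; exists (a - b); rewrite intrB.
suff -> : x - y - (a%:~R - b%:~R) = (x - a%:~R) - (y - b%:~R).
  exact (subgroupB ideal_subgroup Fa Fb).
by rewrite !opprB [LHS]addrACA [RHS]addrACA [- y + _]addrC.
Qed.

Lemma ideal_Zplus x : F x -> Zplus F x.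
Proof. by exists 0; rewrite subr0. Qed.

Lemma Zplus_sub_order R : is_order R -> is_conductor R F -> forall x, Zplus F x -> R x.
Proof.
move=> R_order [_ FR _] x [z Fxz]; rewrite -(subrK z%:~R x).
exact (subgroupD (order_subgroup R_order) (FR _ Fxz) (order_int z R_order)).
Qed.

Hypothesis mulC : commutative (@GRing.mul L).

Lemma Zplus_Ok x : Zplus F x -> Ok x.
Proof.
move=> [z Fxz]; rewrite -(subrK z%:~R x).
have Oxz : Ok (x - z%:~R) by case: F_ideal => FOk _ _ _; apply: FOk.
exact (subgroupD (Ok_subgroup mulC) Oxz (Ok_int mulC z)).
Qed.

Lemma Zplus_mul x y : Zplus F x -> Zplus F y -> Zplus F (x * y).
Proof.
move=> Zx Zy; have Oy := Zplus_Ok Zy; case: Zx Zy => [a Fa] [b Fb]; exists (a * b).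
have := subgroupD ideal_subgroup (idealM Oy Fa) (idealM (Ok_int mulC a) Fb).
by rewrite intrM !mulrBr [y * x]mulC [y * a%:~R]mulC addrA subrK.
Qed.

Variable f : nat.
Hypotheses (f_gt0 : (0 < f)%N) (f_sqf : squarefree f).
Hypotheses (fOk_F : forall x, Ok x -> F (f%:R * x)) (F_norm : ideal_norm_is F (f ^ 2)).

Lemma ideal_natE k : F k%:R <-> (f %| k)%N.
Proof.
split=> [Fk | /divnK <-].
  apply: squarefree_dvdn f_gt0 f_sqf _ => p p_pr p_f.
  apply: (index_prime_dvd (Ok_subgroup mulC) ideal_subgroup F_norm) => //.
    by move=> x Ox; rewrite -mulr_natr; apply: idealM.
  by rewrite -mulnn dvdn_mulr.
by rewrite mulnC natrM; apply: fOk_F; exact (Ok_int mulC (k %/ f)%N).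
Qed.

Lemma index_Zplus : has_index (@Ok L) (Zplus F) f.
Proof.
rewrite -(mulnK f f_gt0) mulnn.
apply: (index_cyclic_extension (Ok_subgroup mulC) ideal_subgroup F_norm (Ok_int mulC 1)) => //.
exact: ideal_natE.
Qed.

Lemma Zplus_order : is_order (Zplus F).
Proof.
split; [exact: Zplus_Ok | | exact: (subgroupB Zplus_subgroup) | exact: Zplus_mul |].
  by exists 1; rewrite subrr; apply: subgroup0 ideal_subgroup.
by exists f; apply: index_Zplus.
Qed.

Lemma conductor_Zplus : is_conductor (Zplus F) F.
Proof.
split=> // [|I I_ideal IZ x Ix]; first exact: ideal_Zplus.
have [z Fxz] := IZ x Ix.
have zOk a : Ok a -> Zplus F (a *+ `|z|%N).
  move=> Oa; apply/(subgroupMz_abs Zplus_subgroup).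
  have -> : a *~ z = a * x - a * (x - z%:~R) by rewrite mulrBr opprB addrC subrK mulrzr.
  apply: (subgroupB Zplus_subgroup); first by apply: IZ; case: I_ideal => _ _ _; apply.
  by apply: ideal_Zplus; apply: idealM.
have f_z : (f %| `|z|)%N.
  apply: squarefree_dvdn f_gt0 f_sqf _ => p p_pr p_f.
  exact: (index_prime_dvd (Ok_subgroup mulC) Zplus_subgroup index_Zplus zOk).
rewrite -(subrK z%:~R x); apply: (subgroupD ideal_subgroup Fxz).
by apply/(subgroupMz_abs ideal_subgroup); apply/ideal_natE.
Qed.

End IntegersPlusIdeal.

Theorem proposition2p7 (L : falgType rat) (f : nat) :
  etale_cubic L -> (0 < f)%N -> squarefree f ->
  (forall p, prime p -> (p %| f)%N -> ~ type3 L p) ->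
  forall F : L -> Prop, is_Ok_ideal F ->
  (forall x, Ok x -> F (f%:R * x)%R) ->
  ideal_norm_is F (f ^ 2)%N ->
  (is_order (Zplus F) /\ has_index (@Ok L) (Zplus F) f /\
     is_conductor (Zplus F) F) /\
  (forall R : L -> Prop, is_order R -> has_index (@Ok L) R f ->
     is_conductor R F -> forall x, R x <-> Zplus F x).
Proof.
(* The type-3 hypothesis is
   redundant: for an inert prime p | f, F + pO_k would be an ideal of index p^2
   in O_k, whereas O_k/pO_k is a field. *)
move=> [mulC _ _] f_gt0 f_sqf _ F F_ideal fOk_F F_norm.
have index_ZF := index_Zplus F_ideal mulC f_gt0 f_sqf fOk_F F_norm.
split; first split.
- exact (Zplus_order F_ideal mulC f_gt0 f_sqf fOk_F F_norm).
- by split=> //; exact (conductor_Zplus F_ideal mulC f_gt0 f_sqf fOk_F F_norm).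
move=> R R_order index_R R_conductor x; split; last exact: Zplus_sub_order.
move=> Rx; have [ROk _ _ _ _] := R_order.
exact (index_eq_sub (Ok_subgroup mulC) (Zplus_subgroup F_ideal) (order_subgroup R_order)
  (Zplus_sub_order R_order R_conductor) index_ZF index_R (ROk x Rx) Rx).
Qed.
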